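(* Let $A$ be a nonempty finite set of positive integers. Then \[ M(\sup A) \le \sum_{d=1}^{\sup A} \mu(d)\, 2^{v(A,d)}, \] and equality holds if and only if $\gcd(A)>1$.
   Context: $\sup A$ is the largest element of $A$. $\mu$ is the Möbius function and $M(N)=\sum_{d=1}^N\mu(d)$ is the Mertens function. For a positive integer $d$, $v(A,d)$ is the number of multiples of $d$ in $A$. *)

From mathcomp Require Import all_boot all_order all_algebra.
From mathcomp Require Import finmap.
Set Implicit Arguments. Unset Strict Implicit. Unset Printing Implicit Defensive.
Import GRing.Theory Num.Theory.
Local Open Scope fset_scope.

Definition mobius (d : nat) : int :=
  if [forall p : 'I_d.+1, (prime p) ==> ~~ (p * p %| d)]%N
  then ((-1) ^+ size (primes d))%R else 0%R.

Definition mertens (N : nat) : int := (\sum_(1 <= d < N.+1) mobius d)%R.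

Definition supA (A : {fset nat}) : nat := (\max_(a <- A) a)%N.

Definition vAd (A : {fset nat}) (d : nat) : nat := #|` [fset a in A | d %| a]|.

Definition gcdA (A : {fset nat}) : nat := \big[gcdn/0%N]_(a <- A) a.

From mathcomp Require Import all_boot all_order all_algebra.
From mathcomp Require Import finmap.
From mathcomp Require Import ring.
Set Implicit Arguments.
Unset Strict Implicit.
Unset Printing Implicit Defensive.

Import Order.TTheory GRing.Theory Num.Theory.
Local Open Scope fset_scope.

(* Expanding the product of the 2^v(A,d) over the elements of A, the sum
   becomes a sum over all subsets T of A of the truncated divisor sums
   sum_{d <= sup A, d | gcd T} mu(d).  The empty set contributes M(sup A);
   every other T has 0 < gcd T <= sup A, so by the Moebius identity
   sum_{d | n} mu(d) = [n = 1] it contributes 1 if gcd T = 1 and 0 otherwise.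
   Hence the difference is the number of nonempty T with gcd T = 1, which
   vanishes exactly when gcd A > 1.  Formally the subsets are enumerated one
   element at a time, carrying the gcd g of the elements chosen so far. *)

Definition squarefree (n : nat) :=
  [forall p : 'I_n.+1, prime p ==> ~~ (p * p %| n)]%N.

Lemma squarefreeP n : (0 < n)%N ->
  reflect (forall p, prime p -> ~~ (p * p %| n))%N (squarefree n).
Proof.
move=> n_gt0; apply: (iffP forallP) => [sqf_n p p_pr|sqf_n p].
  apply/negP => ppn.
  have p_lt : (p < n.+1)%N.
    by rewrite ltnS (leq_trans _ (dvdn_leq n_gt0 ppn)) // leq_pmulr ?prime_gt0.
  by move: (sqf_n (Ordinal p_lt)) => /implyP /(_ p_pr) /negP.
by apply/implyP => /sqf_n.
Qed.

Lemma mobiusE n :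
  mobius n = (if squarefree n then (-1) ^+ size (primes n) else 0)%R.
Proof. by []. Qed.

Lemma mobius1 : mobius 1 = 1%R.
Proof.
rewrite mobiusE; case: squarefreeP => // -[] p p_pr.
by rewrite dvdn1 muln_eq1 andbb; case: eqP p_pr => // ->.
Qed.

Section PrimeMultiple.

Variables (p d : nat).
Hypotheses (p_pr : prime p) (d_gt0 : (0 < d)%N) (p_ndvd_d : ~~ (p %| d)%N).

Lemma size_primes_primeM : size (primes (p * d)) = (size (primes d)).+1.
Proof.
have -> : size (primes (p * d)) = size (p :: primes d); last by [].
apply/perm_size/uniq_perm; first exact: primes_uniq.
  by rewrite /= primes_uniq mem_primes p_pr d_gt0 (negbTE p_ndvd_d).
move=> q; rewrite inE !mem_primes muln_gt0 prime_gt0 //= d_gt0.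
case: (boolP (prime q)) => [q_pr|q_npr] /=.
  by rewrite Euclid_dvdM // dvdn_prime2.
by rewrite orbF; case: eqP q_npr => // ->; rewrite p_pr.
Qed.

Lemma squarefree_primeM : squarefree (p * d) = squarefree d.
Proof.
have pd_gt0 : (0 < p * d)%N by rewrite muln_gt0 prime_gt0.
apply/(sameP (squarefreeP pd_gt0))/(iffP (squarefreeP d_gt0)) => sqf q q_pr.
  have [->|q_neq_p] := eqVneq q p.
    by rewrite dvdn_pmul2l ?prime_gt0.
  have qq_coprime : coprime (q * q) p.
    by rewrite coprimeMl andbb prime_coprime // dvdn_prime2 // eq_sym.
  by rewrite Gauss_dvdr ?sqf.
have [->|q_neq_p] := eqVneq q p.
  by apply: contra p_ndvd_d; apply: dvdn_trans; apply: dvdn_mulr.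
have qq_coprime : coprime (q * q) p.
  by rewrite coprimeMl andbb prime_coprime // dvdn_prime2 // eq_sym.
by rewrite -(Gauss_dvdr _ qq_coprime) sqf.
Qed.

End PrimeMultiple.

Lemma mobius_primeM p d : prime p -> (0 < d)%N ->
  mobius (p * d) = (if (p %| d)%N then 0 else - mobius d)%R.
Proof.
move=> p_pr d_gt0; have [p_dvd_d|p_ndvd_d] := boolP (p %| d)%N.
  rewrite mobiusE; case: squarefreeP => [||//]; first by rewrite muln_gt0 prime_gt0.
  by move=> /(_ p p_pr); rewrite dvdn_pmul2l ?prime_gt0 ?p_dvd_d.
rewrite !mobiusE squarefree_primeM // size_primes_primeM // exprS mulN1r.
by case: ifP; rewrite ?oppr0.
Qed.

Section DivisorsPrime.

Variables (p n : nat).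
Hypotheses (p_pr : prime p) (n_gt0 : (0 < n)%N) (p_dvd_n : (p %| n)%N).

Let np_gt0 : (0 < n %/ p)%N.
Proof. by rewrite divn_gt0 ?prime_gt0 // dvdn_leq. Qed.

Lemma divisors_dvd_prime :
  [seq d <- divisors n | p %| d]%N =i [seq p * e | e <- divisors (n %/ p)]%N.
Proof.
move=> d; rewrite mem_filter -dvdn_divisors //.
apply/andP/mapP => [[/dvdnP [e ->] en]|[e e_dvd ->]].
  exists e; last by rewrite mulnC.
  by rewrite -dvdn_divisors // -(@dvdn_pmul2r p) ?prime_gt0 // divnK.
rewrite -dvdn_divisors // in e_dvd.
by rewrite dvdn_mulr // -(divnK p_dvd_n) [p * e]mulnC dvdn_pmul2r ?prime_gt0.
Qed.

Lemma divisors_ndvd_prime :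
  [seq d <- divisors n | ~~ (p %| d)]%N
  =i [seq d <- divisors (n %/ p) | ~~ (p %| d)]%N.
Proof.
move=> d; rewrite !mem_filter -!dvdn_divisors //.
have [//|p_ndvd_d /=] := boolP (p %| d)%N.
apply/idP/idP => [d_dvd|]; last first.
  by move/dvdn_trans; apply; apply/dvdnP; exists p; rewrite mulnC divnK.
have d_coprime_p : coprime d p by rewrite coprime_sym prime_coprime.
by rewrite -(Gauss_dvdl _ d_coprime_p) divnK.
Qed.

End DivisorsPrime.

Lemma sum_mobius_divisors n : (0 < n)%N ->
  (\sum_(d <- divisors n) mobius d = (n == 1)%:R)%R.
Proof.
move=> n_gt0; have [n_le1|n_gt1] := leqP n 1.
  have -> : n = 1 by apply/eqP; rewrite eqn_leq n_le1.
  by rewrite /divisors /= big_seq1 mobius1.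
set p := pdiv n; have p_pr : prime p by rewrite pdiv_prime.
have p_dvd_n : (p %| n)%N by rewrite pdiv_dvd.
have np_gt0 : (0 < n %/ p)%N by rewrite divn_gt0 ?prime_gt0 // dvdn_leq.
have sum_dvd : (\sum_(d <- divisors n | (p %| d)%N) mobius d
    = - \sum_(e <- divisors (n %/ p) | ~~ (p %| e)%N) mobius e)%R.
  have mulp_inj : injective (muln p).
    by move=> x y /eqP; rewrite eqn_pmul2l ?prime_gt0 // => /eqP.
  have dvd_perm := uniq_perm _ _ (divisors_dvd_prime p_pr n_gt0 p_dvd_n).
  rewrite -big_filter (perm_big _ (dvd_perm _ _));
    rewrite ?filter_uniq ?map_inj_uniq ?divisors_uniq //.
  rewrite big_map -sumrN [RHS]big_mkcond /=; apply: eq_big_seq => e.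
  rewrite -dvdn_divisors // => /(dvdn_gt0 np_gt0) e_gt0.
  by rewrite mobius_primeM //; case: (p %| e)%N; rewrite ?oppr0.
have sum_ndvd : (\sum_(d <- divisors n | ~~ (p %| d)%N) mobius d
    = \sum_(e <- divisors (n %/ p) | ~~ (p %| e)%N) mobius e)%R.
  rewrite -big_filter -[RHS]big_filter; apply/perm_big/uniq_perm;
    rewrite ?filter_uniq ?divisors_uniq //.
  exact: divisors_ndvd_prime.
rewrite (bigID (dvdn p)) /= sum_dvd sum_ndvd addNr.
by rewrite gtn_eqF.
Qed.

Local Notation gcds s := (\big[gcdn/0%N]_(a <- s) a).

(* [subset_mertens N g s] is the sum over all subsets T of s of
   sum_{d <= N, d | gcd(g, T)} mu(d); the sum in the theorem is the case g = 0,
   where gcd(0, T) = gcd T. *)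
Definition subset_mertens (N g : nat) (s : seq nat) : int :=
  (\sum_(1 <= d < N.+1)
     if (d %| g)%N then mobius d * 2 ^+ count (dvdn d) s else 0)%R.

Lemma subset_mertens_cons N g a s :
  subset_mertens N g (a :: s)
  = (subset_mertens N g s + subset_mertens N (gcdn g a) s)%R.
Proof.
rewrite /subset_mertens -big_split; apply: eq_bigr => d _ /=.
rewrite dvdn_gcd; case: (d %| g)%N; case: (d %| a)%N; rewrite /= ?addr0 //.
by rewrite add1n exprS; ring.
Qed.

Lemma subset_mertens_nil N g :
  (0 < g <= N)%N -> subset_mertens N g [::] = (g == 1)%:R%R.
Proof.
case/andP => g_gt0 g_leN; rewrite -sum_mobius_divisors // /subset_mertens.
under eq_bigr do rewrite expr0 mulr1.
rewrite -big_mkcond -big_filter; apply/perm_big/uniq_perm.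
- by rewrite filter_uniq ?iota_uniq.
- exact: divisors_uniq.
move=> d; rewrite mem_filter mem_index_iota -dvdn_divisors //.
have [d_dvd_g|] //= := boolP (d %| g)%N.
by rewrite ltnS (dvdn_gt0 g_gt0 d_dvd_g) (leq_trans (dvdn_leq g_gt0 d_dvd_g)).
Qed.

Lemma subset_mertens0_nil N : subset_mertens N 0 [::] = mertens N.
Proof. by apply: eq_bigr => d _; rewrite dvdn0 expr0 mulr1. Qed.

Lemma subset_mertens_ge0 N g s : (0 < g <= N)%N ->
  (0 <= subset_mertens N g s)%R /\
  (subset_mertens N g s == 0)%R = ~~ coprime g (gcds s).
Proof.
elim: s g => [|a s IHs] g g_bound.
  by rewrite subset_mertens_nil // big_nil /coprime gcdn0; case: (g == 1)%N.
have ga_bound : (0 < gcdn g a <= N)%N.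
  case/andP: g_bound => g_gt0 g_leN.
  by rewrite gcdn_gt0 g_gt0 (leq_trans (dvdn_leq g_gt0 (dvdn_gcdl _ _))).
have [ge0_g eq0_g] := IHs g g_bound; have [ge0_ga eq0_ga] := IHs _ ga_bound.
rewrite subset_mertens_cons big_cons addr_ge0 //; split=> //.
have -> : coprime g (gcdn a (gcds s)) = coprime (gcdn g a) (gcds s).
  by rewrite /coprime gcdnA.
rewrite paddr_eq0 // eq0_g eq0_ga.
by have [/(coprime_dvdl (dvdn_gcdl g a)) ->|] := boolP (coprime g (gcds s)).
Qed.

Lemma subset_mertens0 N s : all (fun a => 0 < a <= N)%N s ->
  (mertens N <= subset_mertens N 0 s)%R /\
  (subset_mertens N 0 s == mertens N) = (gcds s != 1%N).
Proof.
elim: s => [_|a s IHs] /=; first by rewrite subset_mertens0_nil big_nil lexx eqxx.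
case/andP=> a_bound /IHs [ge_s eq_s].
have [ge0_a eq0_a] := subset_mertens_ge0 s a_bound.
rewrite subset_mertens_cons gcd0n big_cons; split; first by rewrite ler_wpDr.
rewrite -subr_eq0 addrAC paddr_eq0 ?subr_ge0 // subr_eq0 eq_s eq0_a.
by case: (gcds s =P 1%N) => // ->; rewrite /coprime gcdn1.
Qed.

Lemma gcds_gt0 s a : a \in s -> (0 < a)%N -> (0 < gcds s)%N.
Proof.
elim: s => [|b s IHs] //; rewrite inE big_cons gcdn_gt0.
by case/orP=> [/eqP <- ->|/IHs /[apply] ->] //; rewrite orbT.
Qed.

Lemma vAd_count A d : vAd A d = count (dvdn d) A.
Proof. by rewrite /vAd card_fset_sum1 -big_fset_condE sum1_count. Qed.

Lemma leq_supA A a : a \in A -> (a <= supA A)%N.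
Proof. by move=> aA; apply: (@leq_bigmax_seq _ _ xpredT id). Qed.

Theorem theorem4p3 (A : {fset nat}) :
  A != fset0 -> (forall a, a \in A -> (0 < a)%N) ->
  (mertens (supA A) <= \sum_(1 <= d < (supA A).+1) mobius d * 2 ^+ vAd A d)%R /\
  (mertens (supA A) = \sum_(1 <= d < (supA A).+1) mobius d * 2 ^+ vAd A d
     <-> (1 < gcdA A)%N)%R.
Proof.
move=> /fset0Pn [a aA] A_gt0.
have -> : (\sum_(1 <= d < (supA A).+1) mobius d * 2 ^+ vAd A d)%R
    = subset_mertens (supA A) 0 A.
  by apply: eq_bigr => d _; rewrite dvdn0 vAd_count.
have A_bound : all (fun a => 0 < a <= supA A)%N A.
  by apply/allP => b bA; rewrite A_gt0 ?leq_supA.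
have [ge_M eq_M] := subset_mertens0 A_bound.
have gcd_gt1 : (1 < gcdA A)%N = (gcdA A != 1%N).
  by rewrite /gcdA ltn_neqAle eq_sym (gcds_gt0 aA (A_gt0 a aA)) andbT.
split=> //; rewrite gcd_gt1 -eq_M.
by split=> [->|/eqP //]; rewrite eqxx.
Qed.
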